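(* Let $G$ be a connected nontrivial graph with $m$ vertices and let $n\geq3$. If $\min\{3n\lambda(G),\ 2(m+2e(G))\}> 6\delta(G)+2$, then $G\boxtimes C_n$ is super restricted edge-connected.
   Context: All graphs are finite, simple and undirected; ''nontrivial'' means having at least two vertices. $C_n$ denotes the cycle on $n$ vertices. For a graph $G$: $e(G)=|E(G)|$; $\delta(G)$ is the minimum degree; $\lambda(G)$ is the edge-connectivity. A restricted edge-cut of a connected graph $G$ is a set $S\subseteq E(G)$ such that $G-S$ is disconnected and every component of $G-S$ has at least $2$ vertices; $\lambda'(G)$ is the minimum cardinality of a restricted edge-cut. A graph is super restricted edge-connected if every minimum restricted edge-cut $S$ isolates an edge, i.e. some component of $G-S$ consists of exactly two (adjacent) vertices. The strong product $G\boxtimes H$ has vertex set $V(G)\times V(H)$, with $(x_1,y_1)$ and $(x_2,y_2)$ adjacent iff either $x_1=x_2$ and $y_1y_2\in E(H)$, or $y_1=y_2$ and $x_1x_2\in E(G)$, or $x_1x_2\in E(G)$ and $y_1y_2\in E(H)$. *)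

From mathcomp Require Import all_boot.
Set Implicit Arguments. Unset Strict Implicit. Unset Printing Implicit Defensive.

Section Graphs.
Variable T : finType.
Implicit Types (e : rel T) (S : {set {set T}}).

Definition simple_graph e := symmetric e /\ irreflexive e.

Definition edges e : {set {set T}} := [set [set p.1; p.2] | p : T * T & e p.1 p.2].

Definition num_edges e := #|edges e|.

(* degree and minimum degree delta(G) (T nonempty in use; #|T| is a dummy upper bound) *)
Definition degree e x := #|[set y | e x y]|.
Definition min_degree e := \big[minn/#|T|]_(x : T) degree e x.

Definition del_edges e S : rel T := [rel x y | e x y && ([set x; y] \notin S)].

Definition connectedb e := [forall x, [forall y, connect e x y]].

Definition is_edge_cut e S := (S \subset edges e) && ~~ connectedb (del_edges e S).

(* lambda(G): minimum size of an edge-cut (E(G) itself is one for nontrivial G) *)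
Definition edge_conn e := \big[minn/#|edges e|]_(S | is_edge_cut e S) #|S|.

Definition is_restricted_edge_cut e S :=
  is_edge_cut e S &&
  [forall x, [exists y, (y != x) && connect (del_edges e S) x y]].

Definition super_restricted_edge_connected e :=
  forall S, is_restricted_edge_cut e S ->
    (forall S', is_restricted_edge_cut e S' -> #|S| <= #|S'|) ->
    exists x y, [/\ x != y, e x y &
      [set z | connect (del_edges e S) x z] = [set x; y]].
End Graphs.

(* the cycle C_n on 'I_n (meant for n >= 3) *)
Definition cycle_rel (n : nat) : rel 'I_n :=
  [rel i j | (val j == (val i).+1 %% n) || (val i == (val j).+1 %% n)].

Definition strong_prod (T U : finType) (e : rel T) (f : rel U) : rel (T * U) :=
  [rel u v | (u != v) && ((u.1 == v.1) || e u.1 v.1) && ((u.2 == v.2) || f u.2 v.2)].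
Arguments cycle_rel n : clear implicits.

(* Let S be a minimum restricted edge-cut of H = G ⊠ C_n and δ = δ(G).  The edges
   leaving the edge {(x,i), (x,i+1)} of H, for a vertex x of minimum degree, form a
   restricted edge-cut with at most 6δ + 2 edges, so |S| <= 6δ + 2.  If no component
   of H - S is a single edge, then some component X and its complement both have at
   least three vertices, and |S| is at least the number of arcs of H leaving X.

   Look at X column by column, a column being the copy of C_n over a vertex of G.  If
   some column lies inside X and another one misses X, then every row and the union
   and intersection of every two consecutive rows separate G, which yields 3nλ(G)
   leaving arcs.  Otherwise, up to replacing X by its complement, every column meets
   the complement of X, so the columns meeting X are nonconstant.  Each nonconstant
   column contributes 2 arcs inside itself and 3 arcs towards each neighbouring column,
   and a case analysis on the graph induced by these columns (two nonadjacent ones, a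
   triangle, an edge, a single vertex) gives at least 6δ + 3 leaving arcs; the edge
   case is where 2(m + 2e(G)) > 6δ + 2 is used, to exclude G = K_2.  Both bounds
   contradict |S| <= 6δ + 2. *)

From mathcomp Require Import all_boot zify.
Set Implicit Arguments. Unset Strict Implicit. Unset Printing Implicit Defensive.

Lemma sum_nat_bool (I : finType) (P : pred I) : \sum_i (P i : nat) = #|[set i | P i]|.
Proof. by rewrite -sum1dep_card [RHS]big_mkcond. Qed.

Lemma sum_prod (I J : finType) (F : I * J -> nat) : \sum_u F u = \sum_a \sum_i F (a, i).
Proof. by rewrite pair_bigA; apply: eq_bigr => -[]. Qed.

Lemma leq_sum_sub (I : finType) (P Q : pred I) (F : I -> nat) :
  (forall i, P i -> Q i) -> \sum_(i | P i) F i <= \sum_(i | Q i) F i.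
Proof.
move=> PQ; rewrite [X in X <= _]big_mkcond [X in _ <= X]big_mkcond.
by apply: leq_sum => i _; case: (boolP (P i)) => // /PQ ->.
Qed.

Lemma leq_pair_sum (I : finType) (F : I -> nat) a b :
  a != b -> F a + F b <= \sum_i F i.
Proof. by move=> ab; rewrite (bigD1 a) //= (bigD1 b) 1?eq_sym //= addnA leq_addr. Qed.

Lemma leq_triple_sum (I : finType) (F : I -> nat) a b c :
  a != b -> a != c -> b != c -> F a + F b + F c <= \sum_i F i.
Proof.
move=> ab ac bc; rewrite (bigD1 a) //= (bigD1 b) 1?eq_sym //= (bigD1 c) /=.
  by rewrite !addnA leq_addr.
by rewrite eq_sym ac eq_sym bc.
Qed.

Lemma leq_split_sum (T : finType) (e : rel T) (Q : {set T}) x (F : T -> nat) :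
  irreflexive e ->
  F x + \sum_(b | e x b && (b \notin Q)) F b + \sum_(b in Q | b != x) F b <= \sum_b F b.
Proof.
move=> eirr; rewrite [X in _ <= X](bigD1 x) //= [X in _ <= _ + X](bigID (mem Q)) /=.
rewrite -addnA leq_add2l addnC.
apply: leq_add; apply: leq_sum_sub => b; first by rewrite andbC.
by case/andP => exb ->; rewrite andbT; apply: contraTneq exb => ->; rewrite eirr.
Qed.

Lemma bigmin_le (I : finType) (P : pred I) (F : I -> nat) m i :
  P i -> \big[minn/m]_(j | P j) F j <= F i.
Proof.
move=> Pi; have : i \in index_enum I by rewrite mem_index_enum.
elim: (index_enum I) => //= k s IH; rewrite inE big_cons.
case/orP => [/eqP <-|kin]; first by rewrite Pi geq_minl.
by case: (P k); rewrite ?geq_min IH ?orbT.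
Qed.

Lemma leq_weighted_sum j1 j2 o1 o2 :
  0 < j1 -> 0 < j2 -> 2 < j1 + j2 -> o1 + o2 + minn o1 o2 <= j1 * o1 + j2 * o2.
Proof.
move=> j1_gt0 j2_gt0 j12; have := leq_pmull o1 j1_gt0; have := leq_pmull o2 j2_gt0.
case: (leqP 2 j1) => [j1_ge2|j1_lt2].
  have : 2 * o1 <= j1 * o1 by rewrite leq_mul2r j1_ge2 orbT.
  lia.
have j2_ge2 : 2 <= j2 by lia.
have : 2 * o2 <= j2 * o2 by rewrite leq_mul2r j2_ge2 orbT.
lia.
Qed.

(** * Counting arcs across a cut *)

Definition cut_arcs (X : finType) (r : rel X) (A B : {pred X}) :=
  \sum_x \sum_y ((x \in A) && (y \notin B) && r x y : nat).

Lemma eq_cut_arcs (X : finType) (r r' : rel X) (A B : {pred X}) :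
  r =2 r' -> cut_arcs r A B = cut_arcs r' A B.
Proof. by move=> rr'; apply: eq_bigr => x _; apply: eq_bigr => y _; rewrite rr'. Qed.

Section CutArcs.
Variables (X : finType) (r : rel X).
Implicit Types (A B : {pred X}) (Z : {set X}) (S : {set {set X}}).

Lemma cut_arcs_card A B :
  cut_arcs r A B = #|[set p : X * X | (p.1 \in A) && (p.2 \notin B) && r p.1 p.2]|.
Proof. by rewrite -sum_nat_bool /cut_arcs pair_bigA. Qed.

Lemma cut_arcs_sum_out Z : cut_arcs r Z Z = \sum_(u in Z) #|[set v | r u v & v \notin Z]|.
Proof.
rewrite /cut_arcs [RHS]big_mkcond; apply: eq_bigr => u _; case: ifP => uZ /=.
  by rewrite -sum_nat_bool; apply: eq_bigr => v _; rewrite andbC.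
by apply: big1.
Qed.

Lemma cut_arcsC Z : symmetric r -> cut_arcs r (~: Z) (~: Z) = cut_arcs r Z Z.
Proof.
move=> rsym; rewrite /cut_arcs exchange_big; apply: eq_bigr => x _; apply: eq_bigr => y _.
by rewrite !inE negbK rsym; case: (x \in Z); case: (y \in Z).
Qed.

Lemma cut_arcs_subrel (r' : rel X) A B : subrel r r' -> cut_arcs r A B <= cut_arcs r' A B.
Proof.
move=> rr'; apply: leq_sum => x _; apply: leq_sum => y _.
by case rxy: (r x y); rewrite ?andbF // (rr' _ _ rxy).
Qed.

Lemma cut_arcs_submod (A B : {set X}) :
  cut_arcs r (A :&: B) (A :&: B) + cut_arcs r (A :|: B) (A :|: B)
  <= cut_arcs r A B + cut_arcs r B A.
Proof.
rewrite /cut_arcs -!big_split /=; apply: leq_sum => x _; rewrite -!big_split /=.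
apply: leq_sum => y _; rewrite !inE.
by case: (x \in A); case: (x \in B); case: (y \in A); case: (y \in B); case: (r x y).
Qed.

Lemma cut_arcs_le_card Z S :
  (forall u v, u \in Z -> v \notin Z -> r u v -> [set u; v] \in S) -> cut_arcs r Z Z <= #|S|.
Proof.
move=> ZS; rewrite cut_arcs_card -(@card_in_imset _ _ (fun p : X * X => [set p.1; p.2])).
  apply: subset_leq_card; apply/subsetP => s /imsetP[p].
  by rewrite inE => /andP[/andP[p1 p2] rp] ->; apply: ZS.
move=> [u v] [u' v']; rewrite !inE /= => /andP[/andP[uZ vZ] _] /andP[/andP[u'Z v'Z] _] E.
have uu' : u = u'.
  have /set2P[//|uv'] : u \in [set u'; v'] by rewrite -E set21.
  by move: v'Z; rewrite -uv' uZ.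
have vv' : v = v'.
  have /set2P[vu'|//] : v \in [set u'; v'] by rewrite -E set22.
  by move: vZ; rewrite vu' u'Z.
by rewrite uu' vv'.
Qed.

Definition boundary_edges Z : {set {set X}} :=
  [set [set p.1; p.2] | p in [set p : X * X | (p.1 \in Z) && (p.2 \notin Z) && r p.1 p.2]].

Lemma card_boundary_edges Z : #|boundary_edges Z| <= cut_arcs r Z Z.
Proof. by rewrite cut_arcs_card leq_imset_card. Qed.

Lemma notin_boundary_edges Z u v :
  (u \in Z) = (v \in Z) -> [set u; v] \notin boundary_edges Z.
Proof.
move=> uv; apply/imsetP => -[[u' v']]; rewrite inE /= => /andP[/andP[u'Z v'Z] _] E.
have memZ w : w \in [set u; v] -> (w \in Z) = (u \in Z) by case/set2P => ->.
move: u'Z v'Z; rewrite memZ; last by rewrite E set21.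
by rewrite memZ ?E ?set22 // => ->.
Qed.

Lemma connect_del_boundary Z u v :
  connect (del_edges r (boundary_edges Z)) u v -> u \in Z -> v \in Z.
Proof.
move=> /connectP[p + ->]; elim: p u => //= w p IH u /andP[/andP[ruw uwS] pth] uZ.
apply: IH pth _; apply/negPn/negP => wZ; move/negP: uwS; apply.
by apply/imsetP; exists (u, w); rewrite ?inE /= ?uZ ?wZ.
Qed.

Lemma boundary_edges_cut Z x y :
  x \in Z -> y \notin Z -> is_edge_cut r (boundary_edges Z).
Proof.
move=> xZ yZ; apply/andP; split.
  apply/subsetP => s /imsetP[p]; rewrite inE => /andP[_ rp] ->.
  by apply/imsetP; exists p; rewrite ?inE.
apply/negP => /forallP/(_ x)/forallP/(_ y)/connect_del_boundary/(_ xZ).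
by rewrite (negbTE yZ).
Qed.

Lemma boundary_edges_restricted Z x y :
  x \in Z -> y \notin Z ->
  (forall u, exists2 v, v != u & r u v && ((u \in Z) == (v \in Z))) ->
  is_restricted_edge_cut r (boundary_edges Z).
Proof.
move=> xZ yZ nbr; rewrite /is_restricted_edge_cut (boundary_edges_cut xZ yZ).
apply/forallP => u; have [v vu /andP[ruv /eqP uvZ]] := nbr u.
apply/existsP; exists v; rewrite vu; apply: connect1.
by rewrite /del_edges /= ruv notin_boundary_edges.
Qed.

End CutArcs.

Section Components.
Variables (X : finType) (r : rel X) (S : {set {set X}}).
Hypotheses (rsym : symmetric r) (rirr : irreflexive r).
Local Notation D := (del_edges r S).
Local Notation comp x := [set z | connect D x z].

Lemma connect_del_edges_sym : connect_sym D.
Proof.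
apply: sym_connect_sym => u v; rewrite /del_edges /= rsym.
by rewrite [[set v; u]]setUC.
Qed.

Lemma cut_arcs_component x : cut_arcs r (comp x) (comp x) <= #|S|.
Proof.
apply: cut_arcs_le_card => u v; rewrite !inE => xu xv ruv.
apply/negPn/negP => uvS; move/negP: xv; apply.
by apply: connect_trans xu (connect1 _); rewrite /del_edges /= ruv.
Qed.

Lemma restricted_cut_components :
  is_restricted_edge_cut r S ->
  (exists x y, [/\ x != y, r x y & comp x = [set x; y]]) \/ (forall x, 3 <= #|comp x|).
Proof.
case/andP => _ /forallP restr.
case: (boolP [forall x, 2 < #|comp x|]) => [/forallP big|/forallPn[x small]]; [by right|left].
have {}small : #|comp x| <= 2 by rewrite leqNgt.
have /existsP[y /andP[yx /connectP[p pth ep]]] := restr x.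
have sub : [set x; y] \subset comp x.
  by apply/subsetP => z /set2P[] ->; rewrite inE ?connect0 //; apply/connectP; exists p.
have compE : comp x = [set x; y].
  by apply/esym/eqP; rewrite eqEcard sub cards2 eq_sym yx.
case: p pth ep => [|c p] /=; first by move=> _ yxE; rewrite yxE eqxx in yx.
case/andP => Dxc _ _.
have : c \in comp x by rewrite inE connect1.
rewrite compE => /set2P[cx|cy]; first by move: Dxc; rewrite cx /del_edges /= rirr.
by exists x, y; split => //; [rewrite eq_sym | move: Dxc; rewrite cy => /andP[]].
Qed.

Lemma card_compl_component x :
  ~~ connectedb D -> (forall w, 3 <= #|comp w|) -> 3 <= #|~: comp x|.
Proof.
move=> /forallPn[a /forallPn[b nab]] big.
have [w wx] : exists w, ~~ connect D x w.
  case: (boolP (connect D x a)) => xa; last by exists a.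
  exists b; apply: contra nab; apply: connect_trans.
  by rewrite connect_del_edges_sym.
apply: leq_trans (big w) (subset_leq_card _); apply/subsetP => z; rewrite !inE => wz.
by apply: contra wx => xz; apply: connect_trans xz _; rewrite connect_del_edges_sym.
Qed.

End Components.

Section Degrees.
Variables (T : finType) (e : rel T).

Lemma edge_conn_le_cut_arcs (Z : {set T}) x y :
  x \in Z -> y \notin Z -> edge_conn e <= cut_arcs e Z Z.
Proof.
move=> xZ yZ; apply: leq_trans (card_boundary_edges e Z).
exact: (bigmin_le _ _ (boundary_edges_cut e xZ yZ)).
Qed.

Lemma min_degree_le x : min_degree e <= degree e x.
Proof. exact: bigmin_le. Qed.

Lemma min_degree_attained (x1 : T) : exists x0, degree e x0 <= min_degree e.
Proof.
exists [arg min_(x < x1) degree e x]; case: arg_minnP => // x0 _ x0min.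
apply: (big_ind (fun k => degree e x0 <= k)) => //; first exact: max_card.
by move=> k l x0k x0l; rewrite leq_min x0k.
Qed.

Lemma degree_ge2 v a b : a != b -> e v a -> e v b -> 1 < degree e v.
Proof. by move=> ab eva evb; apply/card_gt1P; exists a, b; rewrite !inE. Qed.

End Degrees.

(** * The cycle C_n *)

Section Cycle.
Variable n : nat.
Implicit Types (i j k : 'I_n) (J K : {pred 'I_n}).

Lemma cycle_relE i j : cycle_rel n i j = (j == ordS i) || (j == ord_pred i).
Proof.
rewrite /cycle_rel /=; congr orb.
have -> : (val i == (val j).+1 %% n) = (i == ordS j) by [].
by apply/eqP/eqP => [->|->]; rewrite ?ordSK ?ord_predK.
Qed.

Lemma cycle_rel_sym : symmetric (cycle_rel n).
Proof. by move=> i j; rewrite /cycle_rel /= orbC. Qed.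

Lemma ordS_val i : val (ordS i) = if i.+1 == n then 0 else i.+1.
Proof.
case: eqP => [Si|ne]; first by rewrite /= Si modnn.
by rewrite /= modn_small // ltn_neqAle ltn_ord andbT; apply/eqP.
Qed.

Lemma ordS_ind (P : pred 'I_n) k :
  (forall i, P i -> P (ordS i)) -> P k -> forall j, P j.
Proof.
move=> PS Pk j; have iterP m : P (iter m (@ordS n) k) by elim: m => //= m; apply: PS.
have iter_val m : val (iter m (@ordS n) k) = (k + m) %% n.
  elim: m => [|m IH] /=; first by rewrite addn0 modn_small.
  by rewrite IH addnS -addn1 modnDml addn1.
have -> : j = iter (j + (n - k)) (@ordS n) k.
  apply: val_inj; rewrite iter_val.
  have -> : k + (j + (n - k)) = j + n by have := ltn_ord k; lia.
  by rewrite modnDr modn_small.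
exact: iterP.
Qed.

Lemma sum_ordS (F : 'I_n -> nat) : \sum_i F (ordS i) = \sum_i F i.
Proof. by rewrite [RHS](reindex_inj (@ordS_inj n)). Qed.

Lemma exists_ordS_exit J :
  (exists i, i \in J) -> (exists j, j \notin J) -> exists i, (i \in J) && (ordS i \notin J).
Proof.
move=> [k Jk] [j Jj]; apply/existsP; apply: contraNT Jj => /existsPn noexit.
have closed i : i \in J -> ordS i \in J by move=> Ji; have := noexit i; rewrite Ji negbK.
exact: (ordS_ind (P := fun i => i \in J) closed Jk).
Qed.

Definition nonconstant J := (exists i, i \in J) /\ (exists j, j \notin J).

Definition cycle_boundary J := \sum_i ((i \in J) != (ordS i \in J) : nat).

Lemma cycle_boundary_ge2 J : nonconstant J -> 2 <= cycle_boundary J.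
Proof.
move=> [J0 J1]; have [a /andP[Ja Sa]] := exists_ordS_exit J0 J1.
have [b /andP[Jb Sb]] : exists b, (b \in [predC J]) && (ordS b \notin [predC J]).
  apply: exists_ordS_exit; first by case: J1 => j; exists j.
  by case: J0 => i; exists i; rewrite inE negbK.
have ab : a != b by apply: contraTneq Jb => <-; rewrite inE Ja.
apply: leq_trans (leq_pair_sum _ ab); rewrite /= Ja (negbTE Sa).
by move: Jb Sb; rewrite !inE negbK => /negbTE -> ->.
Qed.

Lemma cycle_boundary_alternating J :
  nonconstant J -> (forall i, (ordS (ordS i) \in J) = (i \in J)) -> cycle_boundary J = n.
Proof.
move=> [J0 J1] per; have [a /andP[Ja Sa]] := exists_ordS_exit J0 J1.
have flip i : (i \in J) != (ordS i \in J).
  apply: (ordS_ind (P := fun i => (i \in J) != (ordS i \in J)) (k := a)) i.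
    by move=> i; rewrite per eq_sym.
  by rewrite Ja.
rewrite /cycle_boundary (eq_bigr (fun=> 1)) => [|i _]; last by rewrite flip.
by rewrite sum_nat_const card_ord muln1.
Qed.

Section NoLoops.
Hypothesis n_gt1 : 1 < n.

Lemma ordS_neq i : ordS i != i.
Proof.
apply/eqP => /(congr1 val); rewrite ordS_val; have := ltn_ord i.
by case: eqP => /=; lia.
Qed.

Lemma ord_pred_neq i : ord_pred i != i.
Proof. by rewrite -(inj_eq (@ordS_inj n)) ord_predK eq_sym ordS_neq. Qed.

Lemma cycle_rel_irr : irreflexive (cycle_rel n).
Proof.
move=> i; rewrite cycle_relE ![i == _]eq_sym.
by rewrite (negbTE (ordS_neq i)) (negbTE (ord_pred_neq i)).
Qed.

End NoLoops.

Hypothesis n_gt2 : 2 < n.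
Let n_gt1 : 1 < n := ltnW n_gt2.

Lemma ordS_neq_ord_pred i : ordS i != ord_pred i.
Proof.
rewrite -(inj_eq (@ordS_inj n)) ord_predK; apply/eqP => /(congr1 val).
rewrite !ordS_val; have := ltn_ord i.
by case: (i.+1 =P n) => [Si|_] /=; case: eqP => /=; lia.
Qed.

Lemma leq_closed_nbhd_sum (F : 'I_n -> nat) i :
  F i + F (ordS i) + F (ord_pred i) <= \sum_j F j.
Proof.
apply: leq_triple_sum (ordS_neq_ord_pred i); rewrite eq_sym.
  exact: ordS_neq.
exact: ord_pred_neq.
Qed.

Lemma sum_closed_nbhd_le (F : 'I_n -> 'I_n -> nat) :
  \sum_i (F i i + F i (ordS i) + F (ordS i) i) <= \sum_i \sum_j F i j.
Proof.
have back : \sum_i F (ordS i) i = \sum_i F i (ord_pred i).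
  by rewrite -(sum_ordS (fun i => F i (ord_pred i))); apply: eq_bigr => i _; rewrite ordSK.
by rewrite !big_split /= back -!big_split /=; apply: leq_sum => i _; apply: leq_closed_nbhd_sum.
Qed.

Lemma cycle_boundary_le_cut_arcs J : cycle_boundary J <= cut_arcs (cycle_rel n) J J.
Proof.
have exits i : ((i \in J) && (ordS i \notin J)) + ((i \in J) && (ord_pred i \notin J))
    <= \sum_j ((i \in J) && (j \notin J) && cycle_rel n i j : nat).
  apply: leq_trans (leq_pair_sum _ (ordS_neq_ord_pred i)).
  by rewrite /= !cycle_relE !eqxx !orbT !andbT.
apply: (@leq_trans (\sum_i (((i \in J) && (ordS i \notin J))
                            + ((i \in J) && (ord_pred i \notin J))))); last first.
  by apply: leq_sum => i _; apply: exits.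
rewrite big_split /= -(sum_ordS (fun i => (i \in J) && (ord_pred i \notin J) : nat)) /=.
rewrite -big_split /=; apply: leq_sum => i _; rewrite ordSK.
by case: (i \in J); case: (ordS i \in J).
Qed.

Definition cycle_adj i j := (i == j) || cycle_rel n i j.

Lemma cut_arcs_cycle_adj_shifts J K :
  \sum_i (((i \in J) && (i \notin K)) + ((i \in J) && (ordS i \notin K))
          + ((i \in J) && (ord_pred i \notin K)))
  <= cut_arcs cycle_adj J K.
Proof.
apply: leq_sum => i _.
have := leq_closed_nbhd_sum (fun j => ((i \in J) && (j \notin K) && cycle_adj i j) : nat) i.
by rewrite /= /cycle_adj !cycle_relE !eqxx !orbT !andbT.
Qed.

Lemma cut_arcs_cycle_adj_disagree J K :
  \sum_i (((i \in J) != (i \in K)) + ((i \in J) != (ordS i \in K))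
          + ((ordS i \in J) != (i \in K)))
  <= cut_arcs cycle_adj J K + cut_arcs cycle_adj K J.
Proof.
apply: leq_trans (leq_add (cut_arcs_cycle_adj_shifts J K) (cut_arcs_cycle_adj_shifts K J)).
rewrite -big_split /= !big_split /=.
rewrite -!(sum_ordS (fun i => (i \in _) && (ord_pred i \notin _) : nat)) /=.
rewrite -!big_split /=; apply: leq_sum => i _; rewrite ordSK.
by case: (i \in J); case: (i \in K); case: (ordS i \in J); case: (ordS i \in K).
Qed.

(* The three disagreement counts bound the boundary of J twice and its distance-2
   boundary once; if they add up to at most 2, J is 2-periodic, hence alternating,
   and its boundary is n >= 3. *)
Lemma cut_arcs_cycle_adj_ge3 J K :
  nonconstant J -> 3 <= cut_arcs cycle_adj J K + cut_arcs cycle_adj K J.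
Proof.
move=> Jnc; apply: leq_trans (cut_arcs_cycle_adj_disagree J K); rewrite !big_split /=.
set al := \sum_i _; set be := \sum_i _; set ga := \sum_i _.
have bd_ab : cycle_boundary J <= al + be.
  rewrite /al -(sum_ordS (fun i => (i \in J) != (i \in K) : nat)) /be -big_split /=.
  apply: leq_sum => i _.
  by case: (i \in J); case: (ordS i \in J); case: (ordS i \in K).
have bd_ag : cycle_boundary J <= al + ga.
  rewrite /al /ga -big_split /=; apply: leq_sum => i _.
  by case: (i \in J); case: (ordS i \in J); case: (i \in K).
have bd2_bg : \sum_i ((i \in J) != (ordS (ordS i) \in J) : nat) <= be + ga.
  rewrite /ga -(sum_ordS (fun i => (ordS i \in J) != (i \in K) : nat)) /be -big_split /=.
  apply: leq_sum => i _.
  by case: (i \in J); case: (ordS i \in K); case: (ordS (ordS i) \in J).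
have bd2 := cycle_boundary_ge2 Jnc.
case: (posnP (\sum_i ((i \in J) != (ordS (ordS i) \in J) : nat))) => [/eqP|]; last by lia.
rewrite sum_nat_eq0 => /forallP per.
have {}per i : (ordS (ordS i) \in J) = (i \in J).
  by move: (per i); case: (i \in J); case: (ordS (ordS i) \in J).
by have := cycle_boundary_alternating Jnc per; lia.
Qed.

Lemma cut_arcs_cycle_adj_pred0 J K : K =i pred0 -> 3 * #|J| <= cut_arcs cycle_adj J K.
Proof.
move=> K0; apply: leq_trans (cut_arcs_cycle_adj_shifts J K).
rewrite -sum1_card big_distrr /= big_mkcond /=; apply: leq_sum => i _.
by rewrite !K0; case: (i \in J).
Qed.

End Cycle.

(** * Cuts of G ⊠ C_n, column by column *)

Lemma strong_prod_sym (T U : finType) (e : rel T) (f : rel U) :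
  symmetric e -> symmetric f -> symmetric (strong_prod e f).
Proof.
move=> esym fsym u v; rewrite /strong_prod /= esym fsym eq_sym.
by rewrite [u.1 == _]eq_sym [u.2 == _]eq_sym.
Qed.

Lemma strong_prod_irr (T U : finType) (e : rel T) (f : rel U) :
  irreflexive (strong_prod e f).
Proof. by move=> u; rewrite /strong_prod /= eqxx. Qed.

Section StrongProductCycle.
Variables (T : finType) (e : rel T) (n : nat).
Hypotheses (esym : symmetric e) (eirr : irreflexive e) (n_gt2 : 2 < n).
Local Notation V := (T * 'I_n)%type.
Local Notation h := (strong_prod e (cycle_rel n)).
Implicit Types (Z : {set V}) (Q : {set T}) (a b x y : T).

Definition column Z a : {pred 'I_n} := [pred i | (a, i) \in Z].

Definition col_arcs Z a b :=
  cut_arcs (fun i j => h (a, i) (b, j)) (column Z a) (column Z b).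

Lemma cut_arcs_columns Z : cut_arcs h Z Z = \sum_a \sum_b col_arcs Z a b.
Proof.
rewrite /cut_arcs sum_prod; apply: eq_bigr => a _.
rewrite [RHS]exchange_big; apply: eq_bigr => i _.
by rewrite sum_prod.
Qed.

Lemma card_sum_columns Z Q :
  {in Z, forall u, u.1 \in Q} -> #|Z| = \sum_(a in Q) #|column Z a|.
Proof.
move=> ZQ; rewrite -sum1_card big_mkcond sum_prod [RHS]big_mkcond /=.
apply: eq_bigr => a _; case: ifP => aQ; first by rewrite -sum1_card [RHS]big_mkcond.
by apply: big1 => i _; case: ifP => // /ZQ /=; rewrite aQ.
Qed.

Lemma col_arcs_diag Z a :
  col_arcs Z a a = cut_arcs (cycle_rel n) (column Z a) (column Z a).
Proof.
apply: eq_cut_arcs => i j; rewrite /strong_prod /= xpair_eqE !eqxx /=.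
by case: eqP => [->|]; rewrite ?(cycle_rel_irr (ltnW n_gt2)).
Qed.

Lemma col_arcs_adj Z a b :
  e a b -> col_arcs Z a b = cut_arcs (@cycle_adj n) (column Z a) (column Z b).
Proof.
move=> eab; have ab : (a == b) = false by apply: contraTF eab => /eqP ->; rewrite eirr.
by apply: eq_cut_arcs => i j; rewrite /strong_prod /= xpair_eqE ab eab.
Qed.

Lemma col_arcs_diag_ge2 Z a : nonconstant (column Z a) -> 2 <= col_arcs Z a a.
Proof.
move=> nc; rewrite col_arcs_diag.
exact: leq_trans (cycle_boundary_ge2 nc) (cycle_boundary_le_cut_arcs n_gt2 _).
Qed.

Lemma col_arcs_pair_ge3 Z a b :
  nonconstant (column Z a) -> e a b -> 3 <= col_arcs Z a b + col_arcs Z b a.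
Proof.
move=> nc eab; rewrite col_arcs_adj // col_arcs_adj; last by rewrite esym.
exact: cut_arcs_cycle_adj_ge3.
Qed.

Lemma col_arcs_empty Z a b :
  e a b -> column Z b =i pred0 -> 3 * #|column Z a| <= col_arcs Z a b.
Proof. by move=> eab b0; rewrite col_arcs_adj //; apply: cut_arcs_cycle_adj_pred0. Qed.

(* The three sums count arcs of disjoint sets of ordered column pairs: pairs (x, x),
   pairs between x and a neighbour outside Q (in both directions), and pairs of
   distinct columns of Q. *)
Lemma cut_arcs_ge_around Z Q :
  \sum_(x in Q) col_arcs Z x x
  + \sum_(x in Q) \sum_(b | e x b && (b \notin Q)) (col_arcs Z x b + col_arcs Z b x)
  + \sum_(x in Q) \sum_(b in Q | b != x) col_arcs Z x b
  <= cut_arcs h Z Z.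
Proof.
rewrite -!big_split cut_arcs_columns [X in _ <= X](bigID (mem Q)) /=.
rewrite (eq_bigr (fun x => (col_arcs Z x x + \sum_(b | e x b && (b \notin Q)) col_arcs Z x b
     + \sum_(b in Q | b != x) col_arcs Z x b)
     + \sum_(b | e x b && (b \notin Q)) col_arcs Z b x)); last first.
  by move=> x _; rewrite big_split /=; lia.
rewrite big_split /=; apply: leq_add.
  by apply: leq_sum => x _; apply: leq_split_sum.
rewrite (exchange_big_dep (fun b => b \notin Q)) /=; last by move=> x b _ /andP[].
by apply: leq_sum => b _; apply: leq_sum_sub.
Qed.

Definition outdeg Q x := #|[set b | e x b & b \notin Q]|.

Lemma degree_le_outdeg_nbrs Q x : degree e x <= outdeg Q x + #|[set b in Q | e x b]|.
Proof.
rewrite /degree /outdeg -cardsUI; apply: (leq_trans _ (leq_addr _ _)).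
by apply: subset_leq_card; apply/subsetP => b; rewrite !inE; case: (b \in Q) => ->.
Qed.

Lemma degree_le_outdeg Q x : degree e x <= outdeg Q x + #|Q :\ x|.
Proof.
apply: leq_trans (degree_le_outdeg_nbrs Q x) _; rewrite leq_add2l subset_leq_card //.
apply/subsetP => b; rewrite !inE => /andP[-> exb]; rewrite andbT.
by apply: contraTneq exb => ->; rewrite eirr.
Qed.

Lemma outdeg_isolated Q x : {in Q, forall b, ~~ e x b} -> degree e x <= outdeg Q x.
Proof.
move=> Qx; apply: leq_trans (degree_le_outdeg_nbrs Q x) _.
rewrite -[leqRHS]addn0 leq_add2l leqn0 cards_eq0; apply/eqP/setP => b; rewrite !inE.
by case: (boolP (b \in Q)) => // /Qx /negbTE.
Qed.

Section NonconstantColumns.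
Variables (Z : {set V}) (Q : {set T}).
Hypothesis Qnc : {in Q, forall x, nonconstant (column Z x)}.

Lemma sum_col_arcs_diag_ge : 2 * #|Q| <= \sum_(x in Q) col_arcs Z x x.
Proof.
rewrite -sum1_card big_distrr /=; apply: leq_sum => x xQ.
by rewrite muln1; apply/col_arcs_diag_ge2/Qnc.
Qed.

Lemma sum_col_arcs_out_ge :
  3 * \sum_(x in Q) outdeg Q x
  <= \sum_(x in Q) \sum_(b | e x b && (b \notin Q)) (col_arcs Z x b + col_arcs Z b x).
Proof.
rewrite big_distrr /=; apply: leq_sum => x xQ.
rewrite /outdeg -sum1dep_card big_distrr /=; apply: leq_sum => b /andP[exb _].
by rewrite muln1; apply: col_arcs_pair_ge3 (Qnc xQ) exb.
Qed.

Lemma sum_col_arcs_clique_ge :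
  {in Q &, forall x y, x != y -> e x y} ->
  3 * (#|Q| * #|Q|.-1) <= 2 * \sum_(x in Q) \sum_(b in Q | b != x) col_arcs Z x b.
Proof.
move=> Qcl; have swap : \sum_(x in Q) \sum_(b in Q | b != x) col_arcs Z x b
                      = \sum_(x in Q) \sum_(b in Q | b != x) col_arcs Z b x.
  rewrite (exchange_big_dep (mem Q)) /=; last by move=> x b _ /andP[].
  by apply: eq_bigr => b bQ; apply: eq_bigl => x; rewrite bQ eq_sym.
rewrite mul2n -addnn {2}swap -big_split /= mulnCA -sum_nat_const.
apply: leq_sum => x xQ.
have -> : #|Q|.-1 = \sum_(b in Q | b != x) 1.
  rewrite sum1dep_card (cardsD1 x Q) xQ /=; apply: eq_card => b.
  by rewrite !inE andbC.
rewrite big_distrr /= -big_split /=; apply: leq_sum => b /andP[bQ bx].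
by rewrite muln1; apply: col_arcs_pair_ge3 (Qnc xQ) (Qcl _ _ xQ bQ _); rewrite eq_sym.
Qed.

End NonconstantColumns.

Lemma sum_col_arcs_out_empty Z Q :
  {in Z, forall u, u.1 \in Q} ->
  3 * \sum_(x in Q) #|column Z x| * outdeg Q x
  <= \sum_(x in Q) \sum_(b | e x b && (b \notin Q)) (col_arcs Z x b + col_arcs Z b x).
Proof.
move=> ZQ; rewrite big_distrr /=; apply: leq_sum => x xQ.
rewrite /outdeg -sum1dep_card !big_distrr /=; apply: leq_sum => b /andP[exb bQ].
rewrite muln1; apply: leq_trans (leq_addr _ _); apply: col_arcs_empty exb _ => j.
by rewrite !inE; apply: contraNF bQ => /ZQ.
Qed.

Lemma cut_arcs_ge_nonadjacent Z x y :
  nonconstant (column Z x) -> nonconstant (column Z y) -> x != y -> ~~ e x y ->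
  6 * min_degree e + 4 <= cut_arcs h Z Z.
Proof.
move=> ncx ncy xy nexy.
have Qnc : {in [set x; y], forall v, nonconstant (column Z v)} by move=> v /set2P[] ->.
have dx : degree e x <= outdeg [set x; y] x.
  by apply: outdeg_isolated => b /set2P[] ->; rewrite ?eirr.
have dy : degree e y <= outdeg [set x; y] y.
  by apply: outdeg_isolated => b /set2P[] ->; rewrite ?eirr // esym.
have := cut_arcs_ge_around Z [set x; y].
have := sum_col_arcs_diag_ge Qnc; have := sum_col_arcs_out_ge Qnc.
rewrite !big_setU1 ?inE //= !big_set1 cards2 xy.
by have := min_degree_le e x; have := min_degree_le e y; lia.
Qed.

Lemma cut_arcs_ge_triangle Z x y w :
  {in [set x; y; w], forall v, nonconstant (column Z v)} ->
  e x y -> e x w -> e y w -> 6 * min_degree e + 3 <= cut_arcs h Z Z.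
Proof.
rewrite -setUA => Qnc exy exw eyw.
have neq a b : e a b -> a != b by move=> eab; apply: contraTneq eab => ->; rewrite eirr.
have xy := neq _ _ exy; have xw := neq _ _ exw; have yw := neq _ _ eyw.
have eyx : e y x by rewrite esym.
have ewx : e w x by rewrite esym.
have ewy : e w y by rewrite esym.
have Qcl : {in x |: [set y; w] &, forall a b, a != b -> e a b}.
  by move=> a b; rewrite !inE => /orP[|/orP[]] /eqP -> /orP[|/orP[]] /eqP ->; rewrite ?eqxx.
have cardQ : #|x |: [set y; w]| = 3 by rewrite cardsU1 cards2 yw !inE negb_or xy xw.
have outQ v : v \in x |: [set y; w] -> degree e v <= outdeg (x |: [set y; w]) v + 2.
  move=> vQ; have := degree_le_outdeg (x |: [set y; w]) v.
  by have := cardsD1 v (x |: [set y; w]); rewrite vQ cardQ; lia.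
have := cut_arcs_ge_around Z (x |: [set y; w]).
have := sum_col_arcs_diag_ge Qnc; have := sum_col_arcs_out_ge Qnc.
have := sum_col_arcs_clique_ge Qnc Qcl.
rewrite cardQ !big_setU1 ?big_set1 ?inE ?negb_or ?xy ?xw ?yw //=.
have := outQ x (setU11 _ _).
have := outQ y; rewrite !inE eqxx orbT => /(_ isT).
have := outQ w; rewrite !inE eqxx !orbT => /(_ isT).
have := degree_ge2 yw exy exw; have := degree_ge2 xw eyx eyw; have := degree_ge2 xy ewx ewy.
by have := min_degree_le e x; have := min_degree_le e y; have := min_degree_le e w; lia.
Qed.

Lemma cut_arcs_ge_edge_support Z x y :
  nonconstant (column Z x) -> nonconstant (column Z y) -> e x y ->
  {in Z, forall u, u.1 \in [set x; y]} -> 3 <= #|Z| -> 2 < degree e x + degree e y ->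
  6 * min_degree e + 3 <= cut_arcs h Z Z.
Proof.
move=> ncx ncy exy ZQ Z3 dxy.
have xy : x != y by apply: contraTneq exy => ->; rewrite eirr.
have Qnc : {in [set x; y], forall v, nonconstant (column Z v)} by move=> v /set2P[] ->.
have Qcl : {in [set x; y] &, forall a b, a != b -> e a b}.
  by move=> a b /set2P[] -> /set2P[] ->; rewrite ?eqxx // => _; rewrite esym.
have outQ v : v \in [set x; y] -> degree e v <= outdeg [set x; y] v + 1.
  move=> vQ; have := degree_le_outdeg [set x; y] v; have := cardsD1 v [set x; y].
  by rewrite vQ cards2 xy; lia.
have col_gt0 v : nonconstant (column Z v) -> 0 < #|column Z v|.
  by case=> -[i vi] _; apply/card_gt0P; exists i.
have := card_sum_columns ZQ; rewrite big_setU1 ?big_set1 ?inE //= => cardZ.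
have := cut_arcs_ge_around Z [set x; y].
have := sum_col_arcs_diag_ge Qnc; have := sum_col_arcs_clique_ge Qnc Qcl.
have := sum_col_arcs_out_empty ZQ.
rewrite cards2 xy !big_setU1 ?big_set1 ?inE //=.
have := outQ x (set21 _ _); have := outQ y (set22 _ _).
have := leq_weighted_sum (outdeg [set x; y] x) (outdeg [set x; y] y)
  (col_gt0 _ ncx) (col_gt0 _ ncy) (leq_trans Z3 (eq_leq cardZ)).
by have := min_degree_le e x; have := min_degree_le e y; lia.
Qed.

Lemma cut_arcs_ge_column_support Z a :
  0 < min_degree e -> nonconstant (column Z a) -> {in Z, forall u, u.1 \in [set a]} ->
  3 <= #|Z| -> 6 * min_degree e + 3 <= cut_arcs h Z Z.
Proof.
move=> d_gt0 nca ZQ Z3.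
have Qnc : {in [set a], forall v, nonconstant (column Z v)} by move=> v /set1P ->.
have da : degree e a <= outdeg [set a] a.
  by apply: outdeg_isolated => b /set1P ->; rewrite eirr.
have := card_sum_columns ZQ; rewrite big_set1 => cardZ.
have : 3 * outdeg [set a] a <= #|column Z a| * outdeg [set a] a.
  by rewrite leq_mul2r -cardZ Z3 orbT.
have := cut_arcs_ge_around Z [set a].
have := sum_col_arcs_diag_ge Qnc; have := sum_col_arcs_out_empty ZQ.
rewrite cards1 !big_set1.
by have := min_degree_le e a; lia.
Qed.

(* The columns meeting Z are nonconstant; the cases follow the subgraph of G they
   induce. *)
Lemma cut_arcs_ge_no_full_column Z :
  0 < min_degree e -> (forall x y, e x y -> 2 < degree e x + degree e y) ->
  3 <= #|Z| -> (forall a, exists i, (a, i) \notin Z) ->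
  6 * min_degree e + 3 <= cut_arcs h Z Z.
Proof.
move=> d_gt0 noK2 Z3 notfull.
pose A := [set a | [exists i, (a, i) \in Z]].
have Anc : {in A, forall a, nonconstant (column Z a)}.
  move=> a; rewrite inE => /existsP[i ai].
  by split; [exists i | have [j] := notfull a; exists j].
have ZA : {in Z, forall u, u.1 \in A} by move=> [a i] ai; rewrite inE; apply/existsP; exists i.
case: (boolP [exists x in A, exists y in A, (x != y) && ~~ e x y]).
  case/exists_inP => x xA /exists_inP[y yA /andP[xy nexy]].
  by have := cut_arcs_ge_nonadjacent (Anc x xA) (Anc y yA) xy nexy; lia.
move=> /exists_inPn Acl.
have {}Acl : {in A &, forall x y, x != y -> e x y}.
  by move=> x y xA yA xy; have /exists_inPn/(_ y yA) := Acl x xA; rewrite xy /= negbK.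
have A_gt0 : 0 < #|A|.
  have [[a i] ai] : exists u, u \in Z by apply/card_gt0P; apply: leq_trans Z3.
  by apply/card_gt0P; exists a; apply: ZA ai.
case: (ltngtP #|A| 2) => [A_lt2|A_gt2|/eqP/cards2P[x [y [xy AE]]]].
- have /cards1P[a AE] : #|A| == 1 by rewrite eqn_leq -ltnS A_lt2.
  rewrite AE in Anc ZA; apply: cut_arcs_ge_column_support ZA Z3 => //.
  exact/Anc/set11.
- have /card_gt2P[x [y [w [[xA yA wA] [xy yw wx]]]]] := A_gt2.
  have xw : x != w by rewrite eq_sym.
  apply: cut_arcs_ge_triangle (Acl _ _ xA yA xy) (Acl _ _ xA wA xw) (Acl _ _ yA wA yw).
  by move=> v; rewrite !inE => /orP[/orP[]|] /eqP ->; apply: Anc.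
have exy : e x y by apply: Acl; rewrite ?AE ?set21 ?set22.
rewrite AE in Anc ZA.
exact: cut_arcs_ge_edge_support (Anc x (set21 x y)) (Anc y (set22 x y)) exy ZA Z3
  (noK2 _ _ exy).
Qed.

Definition row Z i : {set T} := [set a | (a, i) \in Z].

Definition row_arcs Z i j := cut_arcs (fun a b => h (a, i) (b, j)) (row Z i) (row Z j).

Lemma cut_arcs_rows Z : cut_arcs h Z Z = \sum_i \sum_j row_arcs Z i j.
Proof.
rewrite /cut_arcs sum_prod exchange_big; apply: eq_bigr => i _.
under eq_bigr do rewrite sum_prod exchange_big.
rewrite exchange_big; apply: eq_bigr => j _; apply: eq_bigr => a _; apply: eq_bigr => b _.
by rewrite !inE.
Qed.

Lemma row_arcs_ge Z i j :
  (i == j) || cycle_rel n i j -> cut_arcs e (row Z i) (row Z j) <= row_arcs Z i j.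
Proof.
move=> ij; apply: cut_arcs_subrel => a b eab; rewrite /strong_prod /= eab ij orbT !andbT.
by rewrite xpair_eqE negb_and; apply/orP; left; apply: contraTneq eab => ->; rewrite eirr.
Qed.

(* Every row, and the union and the intersection of two consecutive rows, separate x
   from y in G; by submodularity the arcs between two consecutive rows pay for the
   last two cuts. *)
Lemma cut_arcs_ge_full_empty Z x y :
  (forall i, (x, i) \in Z) -> (forall i, (y, i) \notin Z) ->
  3 * n * edge_conn e <= cut_arcs h Z Z.
Proof.
move=> full empty; rewrite cut_arcs_rows.
apply: (leq_trans _ (sum_closed_nbhd_le n_gt2 (row_arcs Z))).
have -> : 3 * n * edge_conn e = \sum_(i < n) 3 * edge_conn e.
  by rewrite big_const_ord iter_addn_0 mulnAC.
apply: leq_sum => i _.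
have x_in k : x \in row Z k by rewrite inE.
have y_out k : y \notin row Z k by rewrite inE.
have := edge_conn_le_cut_arcs e (x_in i) (y_out i).
have := @edge_conn_le_cut_arcs _ e (row Z i :&: row Z (ordS i)) x y.
rewrite inE !x_in inE (negbTE (y_out i)) => /(_ isT isT).
have := @edge_conn_le_cut_arcs _ e (row Z i :|: row Z (ordS i)) x y.
rewrite inE !x_in inE negb_or !y_out => /(_ isT isT).
have := cut_arcs_submod e (row Z i) (row Z (ordS i)).
have := row_arcs_ge Z (i := i) (j := i); have := row_arcs_ge Z (i := i) (j := ordS i).
have := row_arcs_ge Z (i := ordS i) (j := i).
rewrite !cycle_relE ordSK !eqxx !orbT /=.
lia.
Qed.

Lemma cut_arcs_ge_balanced Z :
  0 < min_degree e -> (forall x y, e x y -> 2 < degree e x + degree e y) ->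
  6 * min_degree e + 2 < 3 * n * edge_conn e ->
  3 <= #|Z| -> 3 <= #|~: Z| -> 6 * min_degree e + 3 <= cut_arcs h Z Z.
Proof.
move=> d_gt0 noK2 conn_big Z3 Zc3.
case: (boolP [exists a, [forall i, (a, i) \in Z]]) => [/existsP[x /forallP full]|nofull].
  case: (boolP [exists b, [forall i, (b, i) \notin Z]]) => [/existsP[y /forallP empty]|noempty].
    by have := cut_arcs_ge_full_empty full empty; lia.
  rewrite -cut_arcsC; last exact: strong_prod_sym esym (@cycle_rel_sym n).
  apply: cut_arcs_ge_no_full_column => // b.
  by have /forallPn[i /negPn bi] := existsPn noempty b; exists i; rewrite inE negbK.
apply: cut_arcs_ge_no_full_column => // a.
by have /forallPn[i ai] := existsPn nofull a; exists i.
Qed.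

End StrongProductCycle.

(** * Connected graphs and a small restricted cut *)

Section ConnectedGraph.
Variables (T : finType) (e : rel T).
Hypotheses (esym : symmetric e) (eirr : irreflexive e).
Hypotheses (Gconn : connectedb e) (T_gt1 : 1 < #|T|).

Lemma exists_other (x : T) : exists y, y != x.
Proof.
have /card_gt1P[a [b [_ _ ab]]] := T_gt1.
by case: (eqVneq a x) => [<-|ax]; [exists b; rewrite eq_sym | exists a].
Qed.

Lemma exists_nbr (x : T) : exists y, e x y.
Proof.
have [z zx] := exists_other x.
have /connectP[[|c p] /= pth zE] : connect e x z by move/forallP: Gconn => /(_ x)/forallP.
  by rewrite zE eqxx in zx.
by case/andP: pth => exc _; exists c.
Qed.

Lemma min_degree_gt0 : 0 < min_degree e.
Proof.
have [x1 _] : exists x : T, x \in T by apply/card_gt0P; apply: ltnW.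
have [x0 x0min] := min_degree_attained e x1; have [y exy] := exists_nbr x0.
by apply: leq_trans x0min; apply/card_gt0P; exists y; rewrite inE.
Qed.

Lemma connect_degree1_edge x y z :
  e x y -> degree e x = 1 -> degree e y = 1 -> connect e x z -> z \in [set x; y].
Proof.
have nbr1 a b c : degree e a = 1 -> e a b -> e a c -> c = b.
  move=> da eab eac; apply/eqP; apply: contraT => cb.
  have : #|[set c; b]| <= degree e a.
    by apply: subset_leq_card; apply/subsetP => d /set2P[] ->; rewrite inE.
  by rewrite cards2 cb da.
move=> + + + /connectP[p + ->]; elim: p x y => [|c p IH] x y exy dx dy /=.
  by rewrite set21.
case/andP => exc pth; rewrite (nbr1 _ _ _ dx exy exc) in pth *.
by rewrite setUC; apply: IH pth => //; rewrite esym.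
Qed.

Lemma edge_degrees_gt2 :
  6 * min_degree e + 2 < 2 * (#|T| + 2 * num_edges e) ->
  forall x y, e x y -> 2 < degree e x + degree e y.
Proof.
move=> big x y exy; rewrite ltnNge; apply/negP => small.
have d_gt0 := min_degree_gt0.
have [dx dy] : degree e x = 1 /\ degree e y = 1.
  by have := min_degree_le e x; have := min_degree_le e y; lia.
have inxy z : z \in [set x; y].
  by apply: connect_degree1_edge exy dx dy _; move/forallP: Gconn => /(_ x)/forallP.
have cardT : #|T| <= #|[set x; y]|.
  by rewrite -cardsT subset_leq_card //; apply/subsetP => z _; apply: inxy.
have cardE : num_edges e <= #|[set [set x; y]]|.
  apply: subset_leq_card; apply/subsetP => _ /imsetP[[u v] /= /[!inE] euv ->].
  move: (inxy u) (inxy v) euv; rewrite !inE.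
  by case/orP=> /eqP-> /orP[]/eqP->; rewrite ?eirr // => _; rewrite setUC.
by move: cardT cardE; rewrite cards1 cards2; case: (x != y); lia.
Qed.

End ConnectedGraph.

Lemma card_strong_prod_cycle_nbhd (T : finType) (e : rel T) n x (i : 'I_n) :
  irreflexive e ->
  #|[set v | strong_prod e (cycle_rel n) (x, i) v]| < 3 * (degree e x + 1).
Proof.
move=> eirr; set N := [set v | _].
have sub : (x, i) |: N \subset setX (x |: [set y | e x y]) [set i; ordS i; ord_pred i].
  apply/subsetP => -[b j] /setU1P[[-> ->]|]; first by rewrite !inE !eqxx.
  rewrite !inE /strong_prod /= cycle_relE => /andP[/andP[_ xb] ij].
  by rewrite eq_sym xb /= eq_sym -orbA ij.
have cardW : #|[set i; ordS i; ord_pred i]| <= 3.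
  by rewrite (leq_trans (leq_card_setU _ _)) // cards1 cards2; case: (_ != _).
move: (subset_leq_card sub); rewrite cardsX cardsU1 inE strong_prod_irr cardsU1 inE eirr.
by rewrite /degree /= => /leq_trans/(_ (leq_mul (leqnn _) cardW)); lia.
Qed.

(* The witness is the edge P = {(x0, i0), (x0, i0 + 1)} of G ⊠ C_n inside the column
   of a vertex x0; every vertex of G ⊠ C_n keeps a neighbour on its own side of P. *)
Section VerticalEdgeCut.
Variables (T : finType) (e : rel T) (n : nat) (x0 : T) (i0 : 'I_n).
Hypotheses (esym : symmetric e) (eirr : irreflexive e) (n_gt2 : 2 < n).
Local Notation h := (strong_prod e (cycle_rel n)).
Let n_gt1 : 1 < n := ltnW n_gt2.
Local Notation P := [set (x0, i0); (x0, ordS i0)].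

Lemma strong_prod_ordS b (j : 'I_n) : h (b, j) (b, ordS j).
Proof.
rewrite /strong_prod /= eqxx cycle_relE eqxx orbT andbT /= xpair_eqE eqxx /=.
by rewrite eq_sym ordS_neq.
Qed.

Lemma vertical_edge_partner u : u \in P -> exists2 w, w \in P & (w != u) && h u w.
Proof.
have hsym := strong_prod_sym esym (@cycle_rel_sym n).
have S_neq := ordS_neq n_gt1 i0.
case/set2P=> ->; [exists (x0, ordS i0) | exists (x0, i0)]; rewrite ?set21 ?set22 //.
  by rewrite strong_prod_ordS andbT xpair_eqE eqxx.
by rewrite hsym strong_prod_ordS andbT xpair_eqE eqxx eq_sym.
Qed.

Lemma vertical_edge_restricted :
  connectedb e -> 1 < #|T| -> is_restricted_edge_cut h (boundary_edges h P).
Proof.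
move=> Gconn T_gt1; have [y0 y0x0] := exists_other T_gt1 x0.
apply: (@boundary_edges_restricted _ _ _ (x0, i0) (y0, i0)).
- exact: set21.
- by rewrite !inE !xpair_eqE (negbTE y0x0).
move=> u; case: (boolP (u \in P)) => uP.
  by have [w wP /andP[wu huw]] := vertical_edge_partner uP; exists w; rewrite // huw wP.
case: u uP => b j uP; case: (eqVneq b x0) => [bx0|bx0].
  have [c ec] := exists_nbr Gconn T_gt1 x0.
  have cx0 : c != x0 by apply: contraTneq ec => ->; rewrite eirr.
  have x0c : x0 != c by rewrite eq_sym.
  exists (c, j); first by rewrite xpair_eqE bx0 (negbTE cx0).
  rewrite /strong_prod /= xpair_eqE bx0 (negbTE x0c) ec orbT eqxx /=.
  by rewrite !inE !xpair_eqE (negbTE cx0).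
exists (b, ordS j); first by rewrite xpair_eqE eqxx ordS_neq.
by rewrite strong_prod_ordS !inE !xpair_eqE (negbTE bx0).
Qed.

Lemma card_vertical_edge_cut : #|boundary_edges h P| <= 6 * degree e x0 + 2.
Proof.
apply: leq_trans (card_boundary_edges h P) _; rewrite cut_arcs_sum_out.
apply: leq_trans (_ : \sum_(u in P) (3 * degree e x0 + 1) <= _); last first.
  by rewrite sum_nat_const cards2 xpair_eqE eqxx /= eq_sym ordS_neq //; lia.
apply: leq_sum => u uP; have [w wP /andP[_ huw]] := vertical_edge_partner uP.
have : #|[set v | h u v & v \notin P]| < #|[set v | h u v]|.
  apply: proper_card; rewrite properE; apply/andP; split.
    by apply/subsetP => v; rewrite !inE => /andP[].
  by apply/subsetPn; exists w; rewrite inE ?huw ?wP.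
have -> : u = (x0, u.2) by case/set2P: uP => ->.
have := card_strong_prod_cycle_nbhd x0 u.2 eirr.
by move=> degN /leq_ltn_trans/(_ degN); lia.
Qed.

End VerticalEdgeCut.

Lemma small_restricted_cut (T : finType) (e : rel T) n :
  symmetric e -> irreflexive e -> connectedb e -> 1 < #|T| -> 2 < n ->
  exists S, is_restricted_edge_cut (strong_prod e (cycle_rel n)) S
            /\ #|S| <= 6 * min_degree e + 2.
Proof.
move=> esym eirr Gconn T_gt1 n_gt2.
have [x1 _] : exists x : T, x \in T by apply/card_gt0P; apply: ltnW.
have [x0 x0min] := min_degree_attained e x1.
have i0 : 'I_n by exists 0; apply: leq_trans n_gt2.
exists (boundary_edges (strong_prod e (cycle_rel n)) [set (x0, i0); (x0, ordS i0)]).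
split; first exact: vertical_edge_restricted.
by apply: leq_trans (card_vertical_edge_cut x0 i0 esym eirr n_gt2) _; lia.
Qed.

Theorem corollary3p6 (T : finType) (e : rel T) (n : nat) :
  simple_graph e -> connectedb e -> 1 < #|T| -> 3 <= n ->
  6 * min_degree e + 2 < minn (3 * n * edge_conn e) (2 * (#|T| + 2 * num_edges e)) ->
  super_restricted_edge_connected (strong_prod e (cycle_rel n)).
Proof.
move=> [esym eirr] Gconn T_gt1 n_gt2; rewrite leq_min => /andP[conn_big size_big].
move=> S S_rc S_min.
have hsym := strong_prod_sym esym (@cycle_rel_sym n).
have hirr := @strong_prod_irr _ _ e (cycle_rel n).
case: (restricted_cut_components hirr S_rc) => [//|comp_big]; exfalso.
have [S0 [S0_rc S0_small]] := small_restricted_cut esym eirr Gconn T_gt1 n_gt2.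
have [x1 _] : exists x : T, x \in T by apply/card_gt0P; apply: ltnW.
have i0 : 'I_n by exists 0; apply: leq_trans n_gt2.
have S_cut : ~~ connectedb (del_edges (strong_prod e (cycle_rel n)) S).
  by case/andP: S_rc => /andP[].
have upper := cut_arcs_component (strong_prod e (cycle_rel n)) S (x1, i0).
have lower := cut_arcs_ge_balanced esym eirr n_gt2 (min_degree_gt0 Gconn T_gt1)
  (edge_degrees_gt2 esym eirr Gconn T_gt1 size_big) conn_big (comp_big (x1, i0))
  (card_compl_component hsym (x1, i0) S_cut comp_big).
have := leq_trans lower (leq_trans upper (leq_trans (S_min S0 S0_rc) S0_small)).
by lia.
Qed.
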